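(* Let $n\ge 1$, let $k_1,\dots,k_m$ be positive integers and let $R(t)\in\mathbb{C}[[t]]$. Then $$\psi_n\left(\frac{R(t)}{(1-t^{k_1})(1-t^{k_2})\cdots(1-t^{k_m})} \right)= \frac{\psi_n\big(R(t)\,Q_n(t^{k_1})Q_n(t^{k_2})\cdots Q_n(t^{k_m})\big)}{(1-z^{k_1})(1-z^{k_2})\cdots(1-z^{k_m})},$$ where $Q_n(t)=1+t+t^2+\cdots+t^{n-1}$.
   Context: For a positive integer $n$, $\psi_n:\mathbb{C}[[t]]\to\mathbb{C}[[z,t]]$ is the linear map (extended termwise to power series) defined by $\psi_n(t^m)=z^it^j$ where $i\ge 0$ and $0\le j<n$ are the unique integers with $m=ni-j$. Fractions $1/(1-t^k)$, $1/(1-z^k)$ are expanded as geometric power series. *)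

From HB Require Import structures.
From mathcomp Require Import all_boot all_order all_algebra.
From mathcomp Require Import complex.
From mathcomp Require Import Rstruct.
Set Implicit Arguments. Unset Strict Implicit. Unset Printing Implicit Defensive.
Import Order.TTheory GRing.Theory Num.Theory.
Local Open Scope ring_scope.

Definition CC : Type := (Rdefinitions.R)[i].

Definition series := nat -> CC.
(* A formal power series in C[[z,t]]: F i j = coefficient of z^i t^j. *)
Definition bseries := nat -> nat -> CC.

Definition smul (f g : series) : series :=
  fun m => \sum_(i < m.+1) f i * g (m - i)%N.

Definition sone : series := fun m => if m == 0%N then 1 else 0.

Definition sprod (fs : seq series) : series := foldr smul sone fs.

(* substitution t |-> t^k (k > 0): (subst_pow k f)(t) = f(t^k) *)
Definition subst_pow (k : nat) (f : series) : series :=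
  fun m => if (k %| m)%N then f (m %/ k)%N else 0.

Definition geom1 : series := fun _ => 1.

(* 1/(1 - t^k), expanded as a geometric series *)
Definition inv1mXk (k : nat) : series := subst_pow k geom1.

Definition Qn (n : nat) : series := fun m => if (m < n)%N then 1 else 0.

(* psi_n(t^m) = z^i t^j where m = n i - j, i >= 0, 0 <= j < n;
   extended termwise: coefficient of z^i t^j in psi_n f is f (n i - j)
   when 0 <= j < n and j <= n i, and 0 otherwise. *)
Definition psi (n : nat) (f : series) : bseries :=
  fun i j => if (j < n)%N && (j <= n * i)%N then f (n * i - j)%N else 0.

(* multiplication of a series in C[[z,t]] by a series g(z) in z alone *)
Definition zmul (g : series) (F : bseries) : bseries :=
  fun i j => \sum_(l < i.+1) g l * F (i - l)%N j.

From mathcomp Require Import all_boot all_order all_algebra.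
From mathcomp Require Import complex Rstruct zify.
From Stdlib Require Import FunctionalExtensionality.
Set Implicit Arguments. Unset Strict Implicit.
Import GRing.Theory.
Local Open Scope ring_scope.

(* Since 1/(1 - t^k) = Q_n(t^k) / (1 - t^(nk)), the product of the
   1/(1 - t^k) is the product of the Q_n(t^k) times G(t^n), where G is the
   same product of the 1/(1 - t^k).  And psi_n(S(t) G(t^n)) = G(z) psi_n(S),
   because multiplying by t^(nl) raises the z-exponent of psi_n by l. *)

(* Each coefficient of a product of series only involves finitely many
   coefficients of the factors, so ring identities of series are read off
   from the corresponding identities of their truncations in {poly CC}. *)
Definition agree (N : nat) (p : {poly CC}) (f : series) :=
  forall i, (i < N)%N -> p`_i = f i.

Lemma agree_poly N f : agree N (\poly_(i < N) f i) f.
Proof. by move=> i lt_iN; rewrite coef_poly lt_iN. Qed.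
Arguments agree_poly : clear implicits.

Lemma agree_coef_eq N p f g : agree N p f -> agree N p g ->
  forall i, (i < N)%N -> f i = g i.
Proof. by move=> pf pg i lt_iN; rewrite -pf // pg. Qed.

Lemma agree1 N : agree N 1 sone.
Proof. by move=> i _; rewrite coef1 /sone; case: (i == 0%N). Qed.
Arguments agree1 : clear implicits.

Lemma agreeM N p q f g : agree N p f -> agree N q g ->
  agree N (p * q) (smul f g).
Proof.
move=> pf qg i lt_iN; rewrite coefM /smul; apply: eq_bigr => k _.
have le_ki := ltn_ord k.
by rewrite pf ?qg //; lia.
Qed.

Lemma agree_comp_Xn N p f k : (0 < k)%N -> agree N p f ->
  agree N (p \Po 'X^k) (subst_pow k f).
Proof.
move=> k_gt0 pf i lt_iN; rewrite coef_comp_poly_Xn // /subst_pow.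
by case: ifP => // _; apply: pf; apply: leq_ltn_trans (leq_div _ _) lt_iN.
Qed.

Lemma smulC f g : smul f g = smul g f.
Proof.
apply: functional_extensionality => m.
have fg := agreeM (agree_poly m.+1 f) (agree_poly m.+1 g).
have gf := agreeM (agree_poly m.+1 g) (agree_poly m.+1 f).
by rewrite mulrC in gf; apply: agree_coef_eq fg gf _ _.
Qed.

Lemma smulA f g h : smul f (smul g h) = smul (smul f g) h.
Proof.
apply: functional_extensionality => m.
have f_gh := agreeM (agree_poly m.+1 f)
  (agreeM (agree_poly m.+1 g) (agree_poly m.+1 h)).
have fg_h := agreeM (agreeM (agree_poly m.+1 f) (agree_poly m.+1 g))
  (agree_poly m.+1 h).
by rewrite -mulrA in fg_h; apply: agree_coef_eq f_gh fg_h _ _.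
Qed.

Lemma smul1s f : smul sone f = f.
Proof.
apply: functional_extensionality => m.
have one_f := agreeM (agree1 m.+1) (agree_poly m.+1 f).
by rewrite mul1r in one_f; apply: agree_coef_eq one_f (agree_poly m.+1 f) _ _.
Qed.

Lemma smulACA a b c d :
  smul (smul a b) (smul c d) = smul (smul a c) (smul b d).
Proof. by rewrite -!smulA (smulA b c d) (smulC b c) -smulA. Qed.

Lemma subst_powM k f g : (0 < k)%N ->
  subst_pow k (smul f g) = smul (subst_pow k f) (subst_pow k g).
Proof.
move=> k_gt0; apply: functional_extensionality => m.
have lhs := agree_comp_Xn k_gt0
  (agreeM (agree_poly m.+1 f) (agree_poly m.+1 g)).
have rhs := agreeM (agree_comp_Xn k_gt0 (agree_poly m.+1 f))
  (agree_comp_Xn k_gt0 (agree_poly m.+1 g)).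
by rewrite -comp_polyM in rhs; apply: agree_coef_eq lhs rhs _ _.
Qed.

Lemma subst_pow_sone k : (0 < k)%N -> subst_pow k sone = sone.
Proof.
move=> k_gt0; apply: functional_extensionality => m.
have lhs := agree_comp_Xn k_gt0 (agree1 m.+1).
by rewrite comp_polyC in lhs; apply: agree_coef_eq lhs (agree1 m.+1) _ _.
Qed.

Lemma subst_powC k l f : (0 < k)%N -> (0 < l)%N ->
  subst_pow k (subst_pow l f) = subst_pow l (subst_pow k f).
Proof.
move=> k_gt0 l_gt0; apply: functional_extensionality => m.
have kl := agree_comp_Xn k_gt0 (agree_comp_Xn l_gt0 (agree_poly m.+1 f)).
have lk := agree_comp_Xn l_gt0 (agree_comp_Xn k_gt0 (agree_poly m.+1 f)).
rewrite -!comp_polyA !comp_Xn_poly -!exprM mulnC in kl.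
rewrite -!comp_polyA !comp_Xn_poly -!exprM in lk.
exact: agree_coef_eq kl lk _ _.
Qed.

Lemma geom1_Qn n : (0 < n)%N -> geom1 = smul (Qn n) (subst_pow n geom1).
Proof.
move=> n_gt0; apply: functional_extensionality => m.
rewrite /smul /geom1 /Qn /subst_pow.
have lt_mod : (m %% n < m.+1)%N by rewrite ltnS leq_mod.
rewrite (bigD1 (Ordinal lt_mod)) //= big1 ?addr0.
  have dvd_mod : (n %| m - m %% n)%N by rewrite -eqn_mod_dvd ?leq_mod // modn_mod.
  by rewrite ltn_pmod // dvd_mod mulr1.
move=> i /eqP ne_i_mod.
case: ifP => lt_in; last by rewrite mul0r.
case: ifP => dvd_n; last by rewrite mulr0.
have le_im : (i <= m)%N by rewrite -ltnS.
rewrite -eqn_mod_dvd // (modn_small lt_in) in dvd_n.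
by case: ne_i_mod; apply: val_inj; exact/esym/eqP.
Qed.

Lemma inv1mXk_Qn n k : (0 < n)%N -> (0 < k)%N ->
  inv1mXk k = smul (subst_pow k (Qn n)) (subst_pow n (inv1mXk k)).
Proof.
move=> n_gt0 k_gt0.
by rewrite /inv1mXk -subst_powC // -subst_powM // -geom1_Qn.
Qed.

Lemma sprod_inv1mXk_Qn n ks : (0 < n)%N -> all (fun k => 0 < k)%N ks ->
  sprod [seq inv1mXk k | k <- ks] =
  smul (sprod [seq subst_pow k (Qn n) | k <- ks])
       (subst_pow n (sprod [seq inv1mXk k | k <- ks])).
Proof.
move=> n_gt0; elim: ks => [|k ks IHks] /=.
  by rewrite subst_pow_sone // smul1s.
case/andP=> k_gt0 ks_gt0.
by rewrite subst_powM // {1}IHks // {1}(inv1mXk_Qn n_gt0 k_gt0) smulACA.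
Qed.

Lemma big_ord_dvdn (V : nmodType) n M (F : nat -> V) : (0 < n)%N ->
  \sum_(b < M.+1) (if (n %| b)%N then F b else 0) =
  \sum_(l < (M %/ n).+1) F (n * l)%N.
Proof.
move=> n_gt0; elim: M => [|M IHM].
  by rewrite div0n !big_ord_recr !big_ord0 /= dvdn0 muln0.
rewrite big_ord_recr /= IHM divnS //.
case: ifP => [dvd_n|_]; last by rewrite addr0.
have succ_div : (M %/ n).+1 = (M.+1 %/ n)%N by rewrite divnS // dvd_n.
rewrite /= add1n [RHS]big_ord_recr /=; congr (_ + F _).
by rewrite succ_div mulnC divnK.
Qed.

Lemma smul_subst_powE n G S M K : (0 < n)%N -> (M %/ n <= K)%N ->
  smul (subst_pow n G) S M =
  \sum_(l < K.+1 | (n * l <= M)%N) G l * S (M - n * l)%N.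
Proof.
move=> n_gt0 le_MK.
rewrite /smul /subst_pow.
under eq_bigr => b _ do rewrite (fun_if (fun x => x * S (M - b)%N)) mul0r.
rewrite (@big_ord_dvdn _ n M (fun b => G (b %/ n)%N * S (M - b)%N) n_gt0).
rewrite (big_ord_widen K.+1 (fun l => G (n * l %/ n)%N * S (M - n * l)%N)) ?ltnS //.
by apply: eq_big => l; rewrite ?mulKn // ltnS leq_divRL // mulnC.
Qed.

Lemma psi_smul_subst_pow n S G : (0 < n)%N ->
  psi n (smul S (subst_pow n G)) = zmul G (psi n S).
Proof.
move=> n_gt0; rewrite smulC.
apply: functional_extensionality => i; apply: functional_extensionality => j.
rewrite /psi /zmul.
case: ifP => [/andP[lt_jn le_j_ni] | out].
  have le_i : ((n * i - j) %/ n <= i)%N.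
    by apply: leq_trans (leq_div2r n (leq_subr j (n * i))) _; rewrite mulKn.
  rewrite (@smul_subst_powE n G S _ _ n_gt0 le_i) big_mkcond /=.
  apply: eq_bigr => l _.
  have le_nl : (n * l <= n * i)%N by rewrite leq_mul2l -ltnS ltn_ord orbT.
  rewrite lt_jn mulnBr /=; case: ifP => le_nl_M; case: ifP => le_j_nil //.
  - by congr (_ * S _); lia.
  - by move: le_nl_M le_j_nil; lia.
  - by move: le_nl_M le_j_nil; lia.
  - by rewrite mulr0.
rewrite big1 // => l _; rewrite ifF ?mulr0 //.
apply/negP=> /andP[lt_jn le_j]; move/negP: out; apply; rewrite lt_jn /=.
by apply: leq_trans le_j _; rewrite leq_mul2l leq_subr orbT.
Qed.

Theorem lemma4 (n : nat) (ks : seq nat) (R : series) :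
  (0 < n)%N -> all (fun k => 0 < k)%N ks ->
  psi n (smul R (sprod [seq inv1mXk k | k <- ks])) =
  zmul (sprod [seq inv1mXk k | k <- ks])
       (psi n (smul R (sprod [seq subst_pow k (Qn n) | k <- ks]))).
Proof.
move=> n_gt0 ks_gt0.
by rewrite {1}(sprod_inv1mXk_Qn n_gt0 ks_gt0) smulA psi_smul_subst_pow.
Qed.
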